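(* For all even integers $n\ge2$ and real numbers $a\ge1$, $x,y\in(0,\pi)$, we have $\Theta_{n,a}(x,y)\ge 2\sin(x)\sin(y)\bigl(1+\cos(x)\cos(y)\bigr)$. Equality holds if and only if $n=2$, $a=1$.
   Context: For a real number $a$ and integers $0\le m$, $\binom{m+a}{m}=\frac{(a+1)(a+2)\cdots(a+m)}{m!}$ (equal to $1$ when $m=0$). For an integer $n\ge1$, $\Theta_{n,a}(x,y)=\sum_{j=1}^n\binom{n+a-j}{n-j}\frac{\sin(jx)\sin(jy)}{j}$. *)

From Stdlib Require Import Reals Arith Factorial.
Open Scope R_scope.

(* binom_shift m a = binom(m+a, m) = (a+1)(a+2)...(a+m) / m!  (= 1 for m = 0) *)
Fixpoint rising_prod (m : nat) (a : R) : R :=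
  match m with
  | O => 1
  | S k => rising_prod k a * (a + INR (S k))
  end.

Definition binom_shift (m : nat) (a : R) : R := rising_prod m a / INR (fact m).

Definition Theta (n : nat) (a x y : R) : R :=
  sum_f_R0 (fun i => let j := S i in
     binom_shift (n - j) a * (sin (INR j * x) * sin (INR j * y)) / INR j) (n - 1).

(* Since (1-z)^(-a-1) = (1-z)^(-(a-1)) (1-z)^(-2), binom(m+a, m) = Σ_k binom(k+a-2, k) (m+1-k),
   with weights binom(k+a-2, k) >= 0 when a >= 1.  Hence Θ_{n,a} = Σ_k binom(k+a-2, k) Q_{n-k}
   where Q_m(x,y) = Σ_{j<=m} (m+1-j) sin(jx) sin(jy)/j, and the right-hand side is Q_2(x,y).
   Writing sin(jx) sin(jy) = (cos(j(x-y)) - cos(j(x+y)))/2 turns Σ_j c_j sin(jx) sin(jy)/j into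
   (C(u) - C(v))/2 with 0 <= u < v <= π and C' = -Σ_j c_j sin(jt).  For c_j = m+1-j this sine sum is
   ((m+1) sin t - sin((m+1)t)) / (2 - 2 cos t) >= 0; for the coefficients of Q_n - Q_2 with n = 2p+2
   it is (2p sin t - 2 cos((p+3)t) sin(pt)) / (2 - 2 cos t) >= 0.  So C decreases on [0, π] and
   Θ - Q_2 = (Q_n - Q_2) + Σ_{k>=1} binom(k+a-2, k) Q_{n-k} >= 0; the first part vanishes only
   for n = 2 and the k = 1 weight is a - 1. *)

From Stdlib Require Import Reals Lra Lia.
From Coquelicot Require Import Coquelicot.
Open Scope R_scope.

Lemma sum_f_R0_zero_tail (f : nat -> R) N M : (N <= M)%nat ->
  (forall i, (N < i <= M)%nat -> f i = 0) -> sum_f_R0 f M = sum_f_R0 f N.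
Proof.
  intros H; induction H as [|M HM IH]; intros Hz; [reflexivity|].
  simpl. rewrite IH by (intros; apply Hz; lia). rewrite (Hz (S M)) by lia. ring.
Qed.

Lemma sum_f_R0_swap (A : nat -> nat -> R) N K :
  sum_f_R0 (fun i => sum_f_R0 (fun k => A i k) K) N =
  sum_f_R0 (fun k => sum_f_R0 (fun i => A i k) N) K.
Proof.
  induction K as [|K IH]; simpl; [reflexivity|].
  rewrite plus_sum, IH. reflexivity.
Qed.

Lemma sum_f_R0_nonneg (f : nat -> R) N :
  (forall i, (i <= N)%nat -> 0 <= f i) -> 0 <= sum_f_R0 f N.
Proof.
  intros H. rewrite <- (Rmult_0_l (INR (S N))), <- sum_cte.
  apply sum_Rle. exact H.
Qed.

Lemma sum_f_R0_ge_first (f : nat -> R) N :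
  (forall i, (i <= N)%nat -> 0 <= f i) -> f 0%nat <= sum_f_R0 f N.
Proof.
  destruct N as [|N]; intros H; [simpl; lra|].
  rewrite decomp_sum by lia.
  assert (0 <= sum_f_R0 (fun i => f (S i)) (pred (S N))).
  { apply sum_f_R0_nonneg. intros i Hi. apply H. simpl in Hi. lia. }
  lra.
Qed.

Lemma rising_prod_S_shift m b : rising_prod (S m) b = (b + 1) * rising_prod m (b + 1).
Proof.
  induction m as [|m IH]; cbn [rising_prod] in *.
  - change (INR 1) with 1. ring.
  - rewrite IH, (S_INR (S m)), (S_INR m). ring.
Qed.

Lemma rising_prod_nonneg k b : -1 <= b -> 0 <= rising_prod k b.
Proof.
  intros Hb; induction k as [|k IH]; cbn [rising_prod]; [lra|].
  apply Rmult_le_pos; [exact IH|]. rewrite S_INR. pose proof (pos_INR k). lra.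
Qed.

Lemma binom_shift_0 b : binom_shift 0 b = 1.
Proof. unfold binom_shift. simpl. field. Qed.

Lemma binom_shift_1 b : binom_shift 1 b = b + 1.
Proof. unfold binom_shift. simpl. field. Qed.

Lemma binom_shift_nonneg k b : -1 <= b -> 0 <= binom_shift k b.
Proof.
  intros Hb. unfold binom_shift. apply Rmult_le_pos.
  - apply rising_prod_nonneg, Hb.
  - left; apply Rinv_0_lt_compat, INR_fact_lt_0.
Qed.

Lemma binom_shift_pascal i b :
  binom_shift (S i) (b + 1) = binom_shift i (b + 1) + binom_shift (S i) b.
Proof.
  unfold binom_shift. rewrite (rising_prod_S_shift i b). cbn [rising_prod].
  rewrite fact_simpl, mult_INR.
  pose proof (INR_fact_neq_0 i). assert (INR (S i) <> 0) by (apply not_0_INR; lia).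
  field. split; assumption.
Qed.

Lemma binom_shift_hockey i b : binom_shift i (b + 1) = sum_f_R0 (fun k => binom_shift k b) i.
Proof.
  induction i as [|i IH]; simpl.
  - rewrite !binom_shift_0. reflexivity.
  - rewrite binom_shift_pascal, IH. reflexivity.
Qed.

(* Coefficientwise form of (1-z)^(-b-3) = (1-z)^(-b-1) * (1-z)^(-2). *)
Lemma binom_shift_convolution b p :
  sum_f_R0 (fun k => binom_shift k b * INR (S p - k)) p = binom_shift p (b + 2).
Proof.
  induction p as [|p IH].
  - simpl. rewrite !binom_shift_0. ring.
  - rewrite (sum_eq _ (fun k => binom_shift k b * INR (S p - k) + binom_shift k b)).
    2:{ intros k Hk. replace (S (S p) - k)%nat with (S (S p - k)) by lia.
        rewrite S_INR. ring. }
    rewrite plus_sum, <- binom_shift_hockey.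
    change (sum_f_R0 ?f (S p)) with (sum_f_R0 f p + f (S p)).
    cbv beta. rewrite Nat.sub_diag, IH.
    replace (b + 2) with (b + 1 + 1) by ring. rewrite (binom_shift_pascal p (b + 1)). change (INR 0) with 0. ring.
Qed.

Definition sin_sum (c : nat -> R) (N : nat) (t : R) : R :=
  sum_f_R0 (fun i => c i * sin (INR (S i) * t)) N.

Definition cos_sum (c : nat -> R) (N : nat) (t : R) : R :=
  sum_f_R0 (fun i => c i * cos (INR (S i) * t) / INR (S i)) N.

Definition sinsin_sum (c : nat -> R) (N : nat) (x y : R) : R :=
  sum_f_R0 (fun i => c i * (sin (INR (S i) * x) * sin (INR (S i) * y)) / INR (S i)) N.

Lemma INR_S_neq0 i : INR (S i) <> 0.
Proof. apply not_0_INR; lia. Qed.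

Lemma sin_sum_sub c d N t : sin_sum (fun i => c i - d i) N t = sin_sum c N t - sin_sum d N t.
Proof. unfold sin_sum. rewrite <- minus_sum. apply sum_eq; intros i _. ring. Qed.

Lemma sinsin_sum_sub c d N x y :
  sinsin_sum (fun i => c i - d i) N x y = sinsin_sum c N x y - sinsin_sum d N x y.
Proof.
  unfold sinsin_sum. rewrite <- minus_sum. apply sum_eq; intros i _.
  field. apply INR_S_neq0.
Qed.

Lemma sinsin_sum_cos_sum c N x y :
  sinsin_sum c N x y = (cos_sum c N (x - y) - cos_sum c N (x + y)) / 2.
Proof.
  unfold sinsin_sum, cos_sum. rewrite <- minus_sum.
  unfold Rdiv. rewrite (Rmult_comm (sum_f_R0 _ _)), scal_sum.
  apply sum_eq. intros i _.
  rewrite Rmult_minus_distr_l, Rmult_plus_distr_l, cos_minus, cos_plus.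
  field. apply INR_S_neq0.
Qed.

Lemma cos_sum_opp c N t : cos_sum c N (- t) = cos_sum c N t.
Proof.
  unfold cos_sum. apply sum_eq. intros i _.
  rewrite Ropp_mult_distr_r_reverse, cos_neg. reflexivity.
Qed.

Lemma cos_sum_2PI_minus c N t : cos_sum c N (2 * PI - t) = cos_sum c N t.
Proof.
  unfold cos_sum. apply sum_eq. intros i _.
  replace (INR (S i) * (2 * PI - t)) with (- (INR (S i) * t) + 2 * INR (S i) * PI) by ring.
  rewrite cos_period, cos_neg. reflexivity.
Qed.

Lemma derivable_pt_lim_cos_sum c N t : derivable_pt_lim (cos_sum c N) t (- sin_sum c N t).
Proof.
  apply is_derive_Reals. unfold cos_sum, sin_sum.
  rewrite <- (Rmult_1_l (sum_f_R0 _ _)), Ropp_mult_distr_l, scal_sum.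
  eapply is_derive_ext; [intros s; apply sum_n_Reals|].
  rewrite <- sum_n_Reals.
  apply (is_derive_sum_n (fun i s => c i * cos (INR (S i) * s) / INR (S i))). intros i _.
  pose proof (INR_S_neq0 i). set (k := INR (S i)) in *.
  auto_derive; [auto|]. field. assumption.
Qed.

Lemma cos_sum_antitone c N u v : u < v ->
  (forall t, u < t < v -> 0 <= sin_sum c N t) -> cos_sum c N v <= cos_sum c N u.
Proof.
  intros Huv HS.
  destruct (MVT_cor2 (cos_sum c N) (fun t => - sin_sum c N t) u v Huv) as [z [Hz Hz']].
  { intros t _. apply derivable_pt_lim_cos_sum. }
  assert (0 <= sin_sum c N z) by (apply HS; lra). nra.
Qed.

Lemma cos_sum_decreasing_open c N u v : u < v ->
  (forall t, u < t < v -> 0 < sin_sum c N t) -> cos_sum c N v < cos_sum c N u.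
Proof.
  intros Huv HS.
  destruct (MVT_cor2 (cos_sum c N) (fun t => - sin_sum c N t) u v Huv) as [z [Hz Hz']].
  { intros t _. apply derivable_pt_lim_cos_sum. }
  assert (0 < sin_sum c N z) by (apply HS; lra). nra.
Qed.

Lemma cos_sum_decreasing c N t0 u v : u < v ->
  (forall t, u < t < v -> t <> t0 -> 0 < sin_sum c N t) -> cos_sum c N v < cos_sum c N u.
Proof.
  intros Huv HS.
  destruct (Rle_or_lt t0 u) as [H1|H1]; [|destruct (Rle_or_lt v t0) as [H2|H2]].
  - apply cos_sum_decreasing_open; [lra|]. intros t Ht; apply HS; lra.
  - apply cos_sum_decreasing_open; [lra|]. intros t Ht; apply HS; lra.
  - apply Rlt_trans with (cos_sum c N t0);
      apply cos_sum_decreasing_open; try lra; intros t Ht; apply HS; lra.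
Qed.

(* Fold x - y and x + y into 0 <= u < v <= PI using evenness and 2PI-periodicity. *)
Lemma sinsin_sum_cos_sum_interval c N x y : 0 < x < PI -> 0 < y < PI ->
  exists u v, 0 <= u /\ u < v /\ v <= PI /\
    sinsin_sum c N x y = (cos_sum c N u - cos_sum c N v) / 2.
Proof.
  intros Hx Hy. rewrite sinsin_sum_cos_sum.
  assert (Hu : exists u, 0 <= u /\ u < Rmin (x + y) (2 * PI - (x + y)) /\
                         cos_sum c N (x - y) = cos_sum c N u).
  { destruct (Rle_or_lt y x).
    - exists (x - y). split; [lra|split; [apply Rmin_glb_lt; lra| reflexivity]].
    - exists (y - x). split; [lra|split; [apply Rmin_glb_lt; lra|]].
      rewrite <- cos_sum_opp. f_equal; ring. }
  destruct Hu as [u [Hu0 [Hu1 ->]]].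
  destruct (Rle_or_lt (x + y) PI).
  - exists u, (x + y). rewrite Rmin_left in Hu1 by lra. repeat split; lra.
  - exists u, (2 * PI - (x + y)). rewrite Rmin_right in Hu1 by lra.
    rewrite cos_sum_2PI_minus. repeat split; lra.
Qed.

Lemma sinsin_sum_nonneg c N x y : 0 < x < PI -> 0 < y < PI ->
  (forall t, 0 < t < PI -> 0 <= sin_sum c N t) -> 0 <= sinsin_sum c N x y.
Proof.
  intros Hx Hy HS. destruct (sinsin_sum_cos_sum_interval c N x y Hx Hy) as [u [v [Hu [Huv [Hv ->]]]]].
  assert (cos_sum c N v <= cos_sum c N u).
  { apply cos_sum_antitone; [lra|]. intros t Ht; apply HS; lra. }
  lra.
Qed.

Lemma sinsin_sum_pos c N t0 x y : 0 < x < PI -> 0 < y < PI ->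
  (forall t, 0 < t < PI -> t <> t0 -> 0 < sin_sum c N t) -> 0 < sinsin_sum c N x y.
Proof.
  intros Hx Hy HS. destruct (sinsin_sum_cos_sum_interval c N x y Hx Hy) as [u [v [Hu [Huv [Hv ->]]]]].
  assert (cos_sum c N v < cos_sum c N u).
  { apply (cos_sum_decreasing c N t0); [lra|]. intros t Ht; apply HS; lra. }
  lra.
Qed.

Lemma sin_pos_cos_bounds t : 0 < t < PI -> 0 < sin t /\ -1 < cos t < 1.
Proof.
  intros Ht. assert (Hs : 0 < sin t) by (apply sin_gt_0; lra).
  pose proof (sin2_cos2 t) as H. unfold Rsqr in H. repeat split; nra.
Qed.

Lemma Rabs_sin_mult_le p t : 0 <= sin t -> Rabs (sin (INR p * t)) <= INR p * sin t.
Proof.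
  intros Hs. induction p as [|p IH].
  - change (INR 0) with 0. rewrite Rmult_0_l, sin_0, Rabs_R0. lra.
  - rewrite S_INR, Rmult_plus_distr_r, Rmult_1_l, sin_plus.
    eapply Rle_trans; [apply Rabs_triang|]. rewrite !Rabs_mult, (Rabs_right (sin t)) by lra.
    assert (Rabs (sin (INR p * t)) * Rabs (cos t) <= Rabs (sin (INR p * t)) * 1).
    { apply Rmult_le_compat_l; [apply Rabs_pos| apply Rabs_le, COS_bound]. }
    assert (Rabs (cos (INR p * t)) * sin t <= 1 * sin t).
    { apply Rmult_le_compat_r; [lra| apply Rabs_le, COS_bound]. }
    lra.
Qed.

Lemma Rabs_sin_mult_lt p t : (2 <= p)%nat -> 0 < t < PI -> Rabs (sin (INR p * t)) < INR p * sin t.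
Proof.
  intros Hp Ht. destruct (sin_pos_cos_bounds t Ht) as [Hs Hc].
  destruct p as [|p]; [lia|].
  pose proof (Rabs_sin_mult_le p t (Rlt_le _ _ Hs)) as IH.
  assert (1 <= INR p) by (apply (le_INR 1); lia).
  rewrite S_INR, Rmult_plus_distr_r, Rmult_1_l, sin_plus.
  eapply Rle_lt_trans; [apply Rabs_triang|]. rewrite !Rabs_mult, (Rabs_right (sin t)) by lra.
  assert (Rabs (sin (INR p * t)) * Rabs (cos t) <= INR p * sin t * Rabs (cos t)).
  { apply Rmult_le_compat_r; [apply Rabs_pos| exact IH]. }
  assert (INR p * sin t * Rabs (cos t) < INR p * sin t * 1).
  { apply Rmult_lt_compat_l; [nra| apply Rabs_def1; lra]. }
  assert (Rabs (cos (INR p * t)) * sin t <= 1 * sin t).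
  { apply Rmult_le_compat_r; [lra| apply Rabs_le, COS_bound]. }
  lra.
Qed.

(* fejer m i is the coefficient m + 1 - j of frequency j = i + 1; it vanishes for j > m. *)
Definition fejer (m i : nat) : R := INR (m - i).

Lemma sin_sum_ones_closed m t :
  (2 - 2 * cos t) * sin_sum (fun _ => 1) m t = sin t + sin (INR (S m) * t) - sin (INR (S (S m)) * t).
Proof.
  unfold sin_sum. induction m as [|m IH]; cbn [sum_f_R0].
  - rewrite (S_INR 1). change (INR 1) with 1.
    replace ((1 + 1) * t) with (t + t) by ring. rewrite !Rmult_1_l, sin_plus. ring.
  - rewrite Rmult_plus_distr_l, IH, Rmult_1_l.
    set (w := INR (S (S m)) * t).
    replace (INR (S (S (S m))) * t) with (w + t) by (unfold w; rewrite (S_INR (S (S m))); ring).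
    replace (INR (S m) * t) with (w - t) by (unfold w; rewrite (S_INR (S m)); ring).
    rewrite sin_plus, sin_minus. ring.
Qed.

Lemma sin_sum_fejer_S m t :
  sin_sum (fejer (S m)) (S m) t = sin_sum (fejer m) m t + sin_sum (fun _ => 1) m t.
Proof.
  unfold sin_sum, fejer. cbn [sum_f_R0]. rewrite Nat.sub_diag, <- plus_sum.
  change (INR 0) with 0. rewrite Rmult_0_l, Rplus_0_r.
  apply sum_eq. intros i Hi. rewrite Nat.sub_succ_l, S_INR by exact Hi. ring.
Qed.

Lemma sin_sum_fejer_closed m t :
  (2 - 2 * cos t) * sin_sum (fejer m) m t = INR (S m) * sin t - sin (INR (S m) * t).
Proof.
  induction m as [|m IH].
  - unfold sin_sum, fejer. simpl. rewrite Rmult_1_l. ring.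
  - rewrite sin_sum_fejer_S, Rmult_plus_distr_l, IH, sin_sum_ones_closed, (S_INR (S m)). ring.
Qed.

Lemma sin_sum_fejer_pad m N t : (m <= S N)%nat -> sin_sum (fejer m) N t = sin_sum (fejer m) m t.
Proof.
  intros H. unfold sin_sum, fejer. destruct (Nat.le_gt_cases m N).
  - apply sum_f_R0_zero_tail; [assumption|].
    intros i Hi. replace (m - i)%nat with 0%nat by lia. simpl; ring.
  - replace m with (S N) by lia. cbn [sum_f_R0]. rewrite Nat.sub_diag. simpl; ring.
Qed.

Lemma sin_sum_fejer_nonneg m t : 0 < t < PI -> 0 <= sin_sum (fejer m) m t.
Proof.
  intros Ht. destruct (sin_pos_cos_bounds t Ht) as [Hs Hc].
  pose proof (sin_sum_fejer_closed m t) as E.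
  pose proof (Rabs_sin_mult_le (S m) t (Rlt_le _ _ Hs)).
  pose proof (RRle_abs (sin (INR (S m) * t))).
  nra.
Qed.

Lemma sin_sum_fejer_pos m t : (1 <= m)%nat -> 0 < t < PI -> 0 < sin_sum (fejer m) m t.
Proof.
  intros Hm Ht. destruct (sin_pos_cos_bounds t Ht) as [Hs Hc].
  pose proof (sin_sum_fejer_closed m t) as E.
  pose proof (Rabs_sin_mult_lt (S m) t ltac:(lia) Ht).
  pose proof (RRle_abs (sin (INR (S m) * t))).
  nra.
Qed.

Lemma sin_sum_fejer_even_sub_closed p t :
  (2 - 2 * cos t) * (sin_sum (fejer (2 * p + 2)) (2 * p + 2) t - sin_sum (fejer 2) 2 t) =
  2 * INR p * sin t - 2 * cos (INR (p + 3) * t) * sin (INR p * t).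
Proof.
  rewrite Rmult_minus_distr_l, !sin_sum_fejer_closed.
  replace (INR (S (2 * p + 2)) * t) with (INR (p + 3) * t + INR p * t)
    by (rewrite S_INR, !plus_INR, mult_INR; simpl; ring).
  replace (INR 3 * t) with (INR (p + 3) * t - INR p * t) by (rewrite plus_INR; ring).
  rewrite sin_plus, sin_minus, S_INR, plus_INR, mult_INR. simpl. ring.
Qed.

Lemma cos_mult_le_Rabs a b : cos a * b <= Rabs b.
Proof.
  eapply Rle_trans; [apply RRle_abs|]. rewrite Rabs_mult.
  rewrite <- (Rmult_1_l (Rabs b)) at 2.
  apply Rmult_le_compat_r; [apply Rabs_pos| apply Rabs_le, COS_bound].
Qed.

Lemma cos_4_lt_1 t : 0 < t < PI -> t <> PI / 2 -> cos (4 * t) < 1.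
Proof.
  intros Ht Hne. destruct (sin_pos_cos_bounds t Ht) as [Hs Hc].
  assert (Hc0 : cos t <> 0).
  { intros E. apply Hne, cos_inj; try lra. rewrite cos_PI2. exact E. }
  replace (4 * t) with (2 * (2 * t)) by ring. rewrite cos_2a_sin, sin_2a.
  assert (0 < (sin t * cos t) ^ 2) by (apply pow2_gt_0, Rmult_integral_contrapositive; lra).
  nra.
Qed.

Lemma sin_sum_fejer_even_sub_nonneg p t : 0 < t < PI ->
  0 <= sin_sum (fejer (2 * p + 2)) (2 * p + 2) t - sin_sum (fejer 2) 2 t.
Proof.
  intros Ht. destruct (sin_pos_cos_bounds t Ht) as [Hs Hc].
  pose proof (sin_sum_fejer_even_sub_closed p t).
  pose proof (Rabs_sin_mult_le p t (Rlt_le _ _ Hs)).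
  pose proof (cos_mult_le_Rabs (INR (p + 3) * t) (sin (INR p * t))).
  nra.
Qed.

(* For p = 1 the closed form is 2 sin t (1 - cos 4t), which vanishes at t = PI/2. *)
Lemma sin_sum_fejer_even_sub_pos p t : (1 <= p)%nat -> 0 < t < PI -> t <> PI / 2 ->
  0 < sin_sum (fejer (2 * p + 2)) (2 * p + 2) t - sin_sum (fejer 2) 2 t.
Proof.
  intros Hp Ht Hne. destruct (sin_pos_cos_bounds t Ht) as [Hs Hc].
  pose proof (sin_sum_fejer_even_sub_closed p t) as E.
  destruct (Nat.eq_dec p 1) as [->|Hp1].
  - change (INR 1) with 1 in E. replace (INR (1 + 3)) with 4 in E by (simpl; ring).
    rewrite Rmult_1_l in E. pose proof (cos_4_lt_1 t Ht Hne). nra.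
  - pose proof (Rabs_sin_mult_lt p t ltac:(lia) Ht).
    pose proof (cos_mult_le_Rabs (INR (p + 3) * t) (sin (INR p * t))).
    nra.
Qed.

Lemma Theta_fejer_expansion n a x y : (1 <= n)%nat ->
  Theta n a x y =
  sum_f_R0 (fun k => binom_shift k (a - 2) * sinsin_sum (fejer (n - k)) (n - 1) x y) (n - 1).
Proof.
  intros Hn. unfold Theta. cbv zeta.
  transitivity (sum_f_R0 (fun i => sum_f_R0 (fun k => binom_shift k (a - 2) *
     (fejer (n - k) i * (sin (INR (S i) * x) * sin (INR (S i) * y)) / INR (S i))) (n - 1)) (n - 1)).
  - apply sum_eq; intros i Hi.
    replace a with (a - 2 + 2) at 1 by ring.
    rewrite <- binom_shift_convolution, <- (sum_f_R0_zero_tail _ (n - S i) (n - 1)) by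
      (lia || (intros k Hk; replace (S (n - S i) - k)%nat with 0%nat by lia; simpl; ring)).
    unfold Rdiv. rewrite Rmult_assoc, (Rmult_comm (sum_f_R0 _ _)), scal_sum.
    apply sum_eq; intros k Hk. unfold fejer.
    replace (n - k - i)%nat with (S (n - S i) - k)%nat by lia. ring.
  - rewrite sum_f_R0_swap. apply sum_eq; intros k _.
    unfold sinsin_sum. rewrite scal_sum. apply sum_eq; intros i _. ring.
Qed.

Lemma sinsin_sum_fejer_2 N x y : (1 <= N)%nat ->
  sinsin_sum (fejer 2) N x y = 2 * sin x * sin y * (1 + cos x * cos y).
Proof.
  intros HN. unfold sinsin_sum. rewrite (sum_f_R0_zero_tail _ 1 N HN).
  2:{ intros i Hi. unfold fejer. replace (2 - i)%nat with 0%nat by lia. simpl. field. apply INR_S_neq0. }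
  unfold fejer. cbn [sum_f_R0]. rewrite (S_INR 1). simpl (INR (2 - 0)). simpl (INR (2 - 1)).
  change (INR 1) with 1. rewrite !Rmult_1_l, !sin_2a. field.
Qed.

Lemma Theta_sub_decomposition n a x y : (2 <= n)%nat ->
  Theta n a x y - 2 * sin x * sin y * (1 + cos x * cos y) =
  sinsin_sum (fun i => fejer n i - fejer 2 i) (n - 1) x y +
  sum_f_R0 (fun k => binom_shift (S k) (a - 2) * sinsin_sum (fejer (n - S k)) (n - 1) x y) (n - 2).
Proof.
  intros Hn. rewrite Theta_fejer_expansion, decomp_sum, <- (sinsin_sum_fejer_2 (n - 1)) by lia.
  rewrite sinsin_sum_sub, binom_shift_0, Nat.sub_0_r.
  replace (pred (n - 1)) with (n - 2)%nat by lia. ring.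
Qed.

Lemma sinsin_sum_fejer_even_sub_nonneg p N x y : (2 * p + 2 <= S N)%nat ->
  0 < x < PI -> 0 < y < PI ->
  0 <= sinsin_sum (fun i => fejer (2 * p + 2) i - fejer 2 i) N x y.
Proof.
  intros HN Hx Hy. apply sinsin_sum_nonneg; [assumption..|].
  intros t Ht. rewrite sin_sum_sub, (sin_sum_fejer_pad (2 * p + 2) N), (sin_sum_fejer_pad 2 N) by lia.
  apply sin_sum_fejer_even_sub_nonneg, Ht.
Qed.

Lemma sinsin_sum_fejer_even_sub_pos p N x y : (1 <= p)%nat -> (2 * p + 2 <= S N)%nat ->
  0 < x < PI -> 0 < y < PI ->
  0 < sinsin_sum (fun i => fejer (2 * p + 2) i - fejer 2 i) N x y.
Proof.
  intros Hp HN Hx Hy. apply (sinsin_sum_pos _ _ (PI / 2)); [assumption..|].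
  intros t Ht Hne. rewrite sin_sum_sub, (sin_sum_fejer_pad (2 * p + 2) N), (sin_sum_fejer_pad 2 N) by lia.
  apply sin_sum_fejer_even_sub_pos; assumption.
Qed.

Lemma binom_fejer_tail_nonneg n a N K x y : 1 <= a -> (n <= S N)%nat ->
  0 < x < PI -> 0 < y < PI ->
  0 <= sum_f_R0 (fun k => binom_shift (S k) (a - 2) * sinsin_sum (fejer (n - S k)) N x y) K.
Proof.
  intros Ha HN Hx Hy. apply sum_f_R0_nonneg. intros k _.
  apply Rmult_le_pos; [apply binom_shift_nonneg; lra|].
  apply sinsin_sum_nonneg; [assumption..|]. intros t Ht.
  rewrite sin_sum_fejer_pad by lia. apply sin_sum_fejer_nonneg, Ht.
Qed.

Lemma binom_fejer_tail_pos n a N K x y : 1 < a -> (2 <= n <= S N)%nat ->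
  0 < x < PI -> 0 < y < PI ->
  0 < sum_f_R0 (fun k => binom_shift (S k) (a - 2) * sinsin_sum (fejer (n - S k)) N x y) K.
Proof.
  intros Ha HN Hx Hy. eapply Rlt_le_trans.
  2:{ apply sum_f_R0_ge_first. intros k _.
      apply Rmult_le_pos; [apply binom_shift_nonneg; lra|].
      apply sinsin_sum_nonneg; [assumption..|]. intros t Ht.
      rewrite sin_sum_fejer_pad by lia. apply sin_sum_fejer_nonneg, Ht. }
  rewrite binom_shift_1. apply Rmult_lt_0_compat; [lra|].
  apply (sinsin_sum_pos _ _ 0); [assumption..|]. intros t Ht _.
  rewrite sin_sum_fejer_pad by lia. apply sin_sum_fejer_pos; [lia| exact Ht].
Qed.

Lemma Theta_2_1 x y : Theta 2 1 x y = 2 * sin x * sin y * (1 + cos x * cos y).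
Proof.
  unfold Theta, binom_shift. cbn. rewrite !Rmult_1_l, !sin_2a. field.
Qed.

Theorem theorem3p8 :
  forall (n : nat) (a x y : R),
    Nat.Even n -> (2 <= n)%nat -> 1 <= a ->
    0 < x < PI -> 0 < y < PI ->
    Theta n a x y >= 2 * sin x * sin y * (1 + cos x * cos y) /\
    (Theta n a x y = 2 * sin x * sin y * (1 + cos x * cos y) <-> (n = 2%nat /\ a = 1)).
Proof.
  intros n a x y [m Hm] Hn Ha Hx Hy.
  destruct m as [|p]; [lia|]. replace n with (2 * p + 2)%nat in * by lia. clear Hm.
  pose proof (Theta_sub_decomposition (2 * p + 2) a x y Hn) as E.
  pose proof (sinsin_sum_fejer_even_sub_nonneg p (2 * p + 2 - 1) x y ltac:(lia) Hx Hy).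
  pose proof (binom_fejer_tail_nonneg (2 * p + 2) a (2 * p + 2 - 1) (2 * p + 2 - 2) x y Ha
                ltac:(lia) Hx Hy).
  split; [lra|]. split.
  - intros Heq. split.
    + destruct p as [|p]; [reflexivity|].
      pose proof (sinsin_sum_fejer_even_sub_pos (S p) (2 * S p + 2 - 1) x y
                    ltac:(lia) ltac:(lia) Hx Hy).
      lra.
    + destruct (Req_dec a 1) as [|Ha1]; [assumption|].
      pose proof (binom_fejer_tail_pos (2 * p + 2) a (2 * p + 2 - 1) (2 * p + 2 - 2) x y
                    ltac:(lra) ltac:(lia) Hx Hy).
      lra.
  - intros [-> ->]. apply Theta_2_1.
Qed.
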